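(* Every state $\rho\in\mathrm{co}(\mathcal U)$ satisfies $|\rho_{ij}|\le\min\{\rho_{ii},\rho_{jj}\}$ for all pairs of indices $i,j$. Consequently, the only pure states in $\mathrm{co}(\mathcal U)$ are the uniformly coherent ones.
   Context: Fixed computational basis $\{|i\rangle\}_{i=1}^d$. $\mathcal U_k$ is the set of uniformly coherent states $|\Psi\rangle=k^{-1/2}\sum_{j\in J}e^{i\theta_j}|j\rangle$, $|J|=k$, $\theta_j\in\mathbb R$; $\mathcal U=\bigcup_{k=1}^d\mathcal U_k$ (as density matrices), and $\mathrm{co}(\mathcal U)$ its convex hull. A pure state is uniformly coherent if it lies in $\mathcal U$. *)

From HB Require Import structures.
From mathcomp Require Import all_boot all_order all_algebra.
From mathcomp Require Import reals trigo.
From mathcomp Require Import complex.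
Set Implicit Arguments. Unset Strict Implicit. Unset Printing Implicit Defensive.
Import Order.TTheory GRing.Theory Num.Theory.
Local Open Scope ring_scope.
Local Open Scope complex_scope.

Section Defs.
Variables (R : realType) (d : nat).

Definition expi (t : R) : R[i] := (cos t) +i* (sin t).

Definition adj m n (A : 'M[R[i]]_(m, n)) : 'M[R[i]]_(n, m) := (map_mx Num.conj A)^T.

Definition proj (psi : 'cV[R[i]]_d) : 'M[R[i]]_d := psi *m adj psi.

Definition unif_vec (J : {set 'I_d}) (theta : 'I_d -> R) : 'cV[R[i]]_d :=
  \col_j (if j \in J then ((Num.sqrt (#|J|%:R : R))^-1)%:C * expi (theta j) else 0).

Definition in_U (rho : 'M[R[i]]_d) : Prop :=
  exists (J : {set 'I_d}) (theta : 'I_d -> R),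
    (1 <= #|J| <= d)%N /\ rho = proj (unif_vec J theta).

Definition in_coU (rho : 'M[R[i]]_d) : Prop :=
  exists (n : nat) (w : 'I_n -> R) (sigma : 'I_n -> 'M[R[i]]_d),
    (forall l, 0 <= w l) /\ \sum_l w l = 1 /\ (forall l, in_U (sigma l)) /\
    rho = \sum_l (w l)%:C *: sigma l.

Definition unit_vec (psi : 'cV[R[i]]_d) : Prop :=
  \sum_j `|psi j 0| ^+ 2 = 1.

End Defs.

From HB Require Import structures.
From mathcomp Require Import all_boot all_order all_algebra.
From mathcomp Require Import reals trigo.
From mathcomp Require Import complex.
From mathcomp Require Import lra.
Set Implicit Arguments. Unset Strict Implicit. Unset Printing Implicit Defensive.
Import Order.TTheory GRing.Theory Num.Theory.
Local Open Scope ring_scope.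
Local Open Scope complex_scope.

(* For rho = |psi><psi| the bound |rho_ij| <= min(rho_ii, rho_jj) reads
   |psi_i| |psi_j| <= min(|psi_i|^2, |psi_j|^2), i.e. all nonzero entries of
   psi have the same modulus.  Uniformly coherent psi satisfy this, and the
   bound survives nonnegative combinations.  Conversely, a unit vector with
   entries of common modulus on its support J has modulus 1/sqrt |J| there,
   and its phases are the arguments of its entries. *)

Definition diag_dominant (C : numDomainType) d (A : 'M[C]_d) : Prop :=
  forall i j, `|A i j| <= A i i /\ `|A i j| <= A j j.

Lemma diag_dominant_sum (C : numDomainType) d n
    (c : 'I_n -> C) (A : 'I_n -> 'M[C]_d) :
  (forall l, 0 <= c l) -> (forall l, diag_dominant (A l)) ->
  diag_dominant (\sum_l c l *: A l).
Proof.
move=> c_ge0 A_dom i j; rewrite !summxE.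
have norm_le : `|\sum_l (c l *: A l) i j| <= \sum_l c l * `|A l i j|.
  apply: le_trans (ler_norm_sum _ _ _) _; apply: ler_sum => l _.
  by rewrite mxE normrM ger0_norm.
by split; apply: le_trans norm_le _; apply: ler_sum => l _; rewrite mxE;
  apply: ler_wpM2l => //; case: (A_dom l i j).
Qed.

Section PolarForm.
Variable R : realType.

Definition angle (z : R[i]) : R :=
  if 0 <= complex.Im z then acos (complex.Re z) else - acos (complex.Re z).

Lemma norm_expi (t : R) : `|expi t| = 1.
Proof. by rewrite normc_def /= cos2Dsin2 sqrtr1. Qed.

Lemma expi_angle (z : R[i]) : `|z| = 1 -> expi (angle z) = z.
Proof.
case: z => a b; rewrite normc_def /angle /= => -[] h.
have h2 : a ^+ 2 + b ^+ 2 = 1.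
  by rewrite -[LHS]sqr_sqrtr ?h ?expr1n // addr_ge0 // sqr_ge0.
have ha : -1 <= a <= 1 by apply/andP; split; nra.
have hs : Num.sqrt (1 - a ^+ 2) = `|b|.
  by rewrite -h2 addrAC subrr add0r sqrtr_sqr.
have [hb|hb] := leP 0 b.
  by rewrite /expi acosK ?sin_acos // ?hs ?ger0_norm.
by rewrite /expi cosN sinN acosK ?sin_acos // ?hs ?ltr0_norm ?opprK.
Qed.

(* [angle (0 / 0)] is junk, but it is multiplied by [`|0| = 0]. *)
Lemma polarE (z : R[i]) : z = `|z| * expi (angle (z / `|z|)).
Proof.
have [->|z_neq0] := eqVneq z 0; first by rewrite normr0 mul0r.
rewrite expi_angle; first by rewrite mulrC divfK ?normr_eq0.
by rewrite normrM normfV normr_id mulfV ?normr_eq0.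
Qed.

End PolarForm.

Section RankOneProjectors.
Variables (R : realType) (d : nat).
Implicit Types (v : 'cV[R[i]]_d) (i j : 'I_d).

Definition flat_vec v : Prop :=
  forall i j, v i 0 != 0 -> v j 0 != 0 -> `|v i 0| = `|v j 0|.

Lemma proj_mxE v i j : proj v i j = v i 0 * (v j 0)^*.
Proof. by rewrite /proj /adj !mxE big_ord1 !mxE. Qed.

Lemma norm_proj_mxE v i j : `|proj v i j| = `|v i 0| * `|v j 0|.
Proof. by rewrite proj_mxE normrM norm_conjC. Qed.

Lemma proj_diagE v i : proj v i i = `|v i 0| ^+ 2.
Proof. by rewrite proj_mxE -normCK. Qed.

Lemma flat_vec_norm_mul_le v i j :
  flat_vec v -> `|v i 0| * `|v j 0| <= `|v i 0| ^+ 2.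
Proof.
move=> flat_v; have [->|vi_neq0] := eqVneq (v i 0) 0.
  by rewrite normr0 mul0r expr0n.
have [->|vj_neq0] := eqVneq (v j 0) 0; first by rewrite normr0 mulr0 exprn_ge0.
by rewrite (flat_v j i) // expr2.
Qed.

Lemma proj_diag_dominantP v : diag_dominant (proj v) <-> flat_vec v.
Proof.
split=> [dom_v i j vi_neq0 vj_neq0 | flat_v i j].
  have norm_le k l : v k 0 != 0 -> `|v l 0| <= `|v k 0|.
    move=> vk_neq0; have [] := dom_v k l.
    by rewrite norm_proj_mxE proj_diagE expr2 ler_pM2l ?normr_gt0.
  by apply/eqP; rewrite eq_le !norm_le.
rewrite norm_proj_mxE !proj_diagE [X in _ /\ X <= _]mulrC.
by split; apply: flat_vec_norm_mul_le.
Qed.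

Lemma unif_vec_flat (J : {set 'I_d}) (theta : 'I_d -> R) :
  flat_vec (unif_vec J theta).
Proof.
move=> i j; rewrite !mxE.
case: (i \in J); last by rewrite eqxx.
case: (j \in J); last by rewrite eqxx.
by rewrite !normrM !norm_expi.
Qed.

Lemma in_U_diag_dominant (rho : 'M[R[i]]_d) : in_U rho -> diag_dominant rho.
Proof. by move=> [J [theta [_ ->]]]; apply/proj_diag_dominantP/unif_vec_flat. Qed.

Lemma in_coU_diag_dominant (rho : 'M[R[i]]_d) : in_coU rho -> diag_dominant rho.
Proof.
move=> [n [w [sigma [w_ge0 [_ [sigma_U ->]]]]]].
apply: diag_dominant_sum => l; first by rewrite ler0c.
exact: in_U_diag_dominant.
Qed.

Definition col_support v : {set 'I_d} := [set j | v j 0 != 0].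

Lemma unit_vec_col_support_neq0 v : unit_vec v -> col_support v != set0.
Proof.
move=> unit_v; apply/negP => /eqP supp0.
move: unit_v; rewrite /unit_vec big1 => [/eqP|j _]; first by rewrite eq_sym oner_eq0.
have : j \notin col_support v by rewrite supp0 in_set0.
by rewrite inE negbK => /eqP ->; rewrite normr0 expr0n.
Qed.

(* [1 = \sum_k |v_k|^2 = #|col_support v| * |v_j|^2] *)
Lemma flat_unit_vec_norm v j :
  unit_vec v -> flat_vec v -> j \in col_support v ->
  `|v j 0| = ((Num.sqrt (#|col_support v|%:R : R))^-1)%:C.
Proof.
move=> unit_v flat_v; rewrite inE => vj_neq0.
have card_sqr : #|col_support v|%:R * `|v j 0| ^+ 2 = 1.
  rewrite -[RHS]unit_v /unit_vec (bigID (mem (col_support v))) /=.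
  rewrite [X in _ + X]big1 ?addr0 => [|k]; last first.
    by rewrite inE negbK => /eqP ->; rewrite normr0 expr0n.
  rewrite mulr_natl -sumr_const; apply: eq_bigr => k; rewrite inE => vk_neq0.
  by rewrite (flat_v j k).
have supp_gt0 : (0 < #|col_support v|)%N by apply/card_gt0P; exists j; rewrite inE.
apply/eqP; rewrite -(eqrXn2 (_ : 0 < 2)%N) ?normr_ge0 ?ler0c ?invr_ge0 ?sqrtr_ge0 //.
apply/eqP; apply: (mulfI (_ : #|col_support v|%:R != 0)); first by rewrite pnatr_eq0 -lt0n.
rewrite card_sqr -rmorphXn /= exprVn sqr_sqrtr ?ler0n //.
rewrite -(rmorph_nat (real_complex R) #|col_support v|) -rmorphM mulfV //.
by rewrite pnatr_eq0 -lt0n.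
Qed.

Lemma flat_unit_vec_in_U v : unit_vec v -> flat_vec v -> in_U (proj v).
Proof.
move=> unit_v flat_v.
exists (col_support v), (fun j => angle (v j 0 / `|v j 0|)); split.
  rewrite card_gt0 unit_vec_col_support_neq0 //=.
  by rewrite -[X in (_ <= X)%N](card_ord d) max_card.
congr proj; apply/matrixP => j k; rewrite (ord1 k) !mxE.
case: ifPn => [j_supp | ]; last by rewrite inE negbK => /eqP.
by rewrite -(flat_unit_vec_norm unit_v flat_v j_supp); apply: polarE.
Qed.

End RankOneProjectors.

Theorem lemma12 (R : realType) (d : nat) :
  (forall rho : 'M[R[i]]_d, in_coU rho ->
     forall i j : 'I_d, `|rho i j| <= rho i i /\ `|rho i j| <= rho j j) /\
  (forall psi : 'cV[R[i]]_d, unit_vec psi ->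
     in_coU (proj psi) -> in_U (proj psi)).
Proof.
split; first exact: in_coU_diag_dominant.
move=> psi unit_psi /in_coU_diag_dominant /proj_diag_dominantP.
exact: flat_unit_vec_in_U.
Qed.
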